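(* Let $\mathbf{B}_{\iota,f}$ be a bridge from an encryption scheme $\mathscr{S}_1$ to an encryption scheme $\mathscr{S}_2$. If the bridge $\mathbf{B}_{\iota,f}$ is IND-CPA secure, then the encryption scheme $\mathscr{S}_1$ is IND-CPA secure.
   Context: $\lambda$ denotes the security parameter; a function $\mu:\mathbb{N}\to[0,\infty)$ is negligible if for every positive integer $c$ there is $N_c$ with $\mu(n)<n^{-c}$ for all $n\ge N_c$. An encryption scheme $\mathscr{S}=(\mathscr{P},\mathscr{C},\mathrm{KeyGen},\mathrm{Enc},\mathrm{Dec})$ consists of finite sets $\mathscr{P}$ (plaintexts), $\mathscr{C}$ (ciphertexts) and PPT algorithms: $\mathrm{KeyGen}(1^\lambda)$ outputs a secret key $sk$ and public key $pk$; $\mathrm{Enc}(pk,m)$ outputs $c\in\mathscr{C}$ for $m\in\mathscr{P}$; $\mathrm{Dec}(sk,c)$ outputs an element of $\mathscr{P}$; with $\Pr[\mathrm{Dec}(sk,\mathrm{Enc}(pk,m))=m]=1-\mathrm{negl}(\lambda)$ (probability over key generation, encryption and uniform $m\in\mathscr{P}$). (A symmetric scheme is one with $pk=sk$; in security games its public key is replaced by access to an encryption oracle.) A secret key is of level $\lambda$ if it is output by $\mathrm{KeyGen}(1^\lambda)$. IND-CPA security: for a bit $b$ and PPT adversary $\mathcal{A}$, the experiment $\mathrm{Exp}_b[\mathcal{A}](1^\lambda)$ runs $(pk,sk)\leftarrow\mathrm{KeyGen}(1^\lambda)$, gets $(m_0,m_1)\leftarrow\mathcal{A}(1^\lambda,pk)$,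 computes $ct\leftarrow\mathrm{Enc}(pk,m_b)$ and returns $b'\leftarrow\mathcal{A}(ct)$. The advantage is $|\Pr[\mathrm{Exp}_0[\mathcal{A}]=1]-\Pr[\mathrm{Exp}_1[\mathcal{A}]=1]|$; the scheme is IND-CPA secure if every PPT adversary has negligible advantage. A bridge $\mathbf{B}_{\iota,f}$ from $\mathscr{S}_1=(\mathscr{P}_1,\mathscr{C}_1,\mathrm{KeyGen}_1,\mathrm{Enc}_1,\mathrm{Dec}_1)$ to $\mathscr{S}_2=(\mathscr{P}_2,\mathscr{C}_2,\mathrm{KeyGen}_2,\mathrm{Enc}_2,\mathrm{Dec}_2)$ consists of: (1) an injective map $\iota:\mathscr{P}_1\to\mathscr{P}_2$ computable by a deterministic polynomial-time algorithm, such that a deterministic polynomial-time algorithm computes $\iota^{-1}$ (outputting $\perp$ off the image); (2) a PPT bridge key generation algorithm which on input $1^\lambda$ runs $\mathrm{KeyGen}_1(1^\lambda)$ to get $(sk_1,pk_1)$, then uses $sk_1$ to find a secret key $sk_2$ of level $\lambda$ for $\mathscr{S}_2$ and calls the key generation of $\mathscr{S}_2$ to produce $pk_2$, and finally on input $(sk_1,pk_1,sk_2,pk_2)$ outputs a bridge key $bk$; (3) a PPT algorithm $f$ taking $bk$ and $c_1\in\mathscr{C}_1$ and outputting $c_2\in\mathscr{C}_2$; such that $\Pr[\mathrm{Dec}_2(sk_2,f(bk,\mathrm{Enc}_1(pk_1,m)))=\iota(m)]=1-\mathrm{negl}(\lambda)$ for uniform $m\in\mathscr{P}_1$. The encryption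 scheme $\mathscr{G}_f$ associated to the bridge: plaintext space $\mathscr{P}_1$, ciphertext space $\mathscr{C}_1\times\mathscr{C}_2$; its key generation runs the bridge key generation to get $sk_1,pk_1,sk_2,pk_2,bk$ and sets secret key $(sk_1,sk_2)$ and public key $(pk_1,pk_2,bk)$; $\mathrm{Enc}_{\mathscr{G}_f}(m)=(a,f(bk,b))$ where $a,b\leftarrow\mathrm{Enc}_1(pk_1,m)$ are independent encryptions; $\mathrm{Dec}_{\mathscr{G}_f}((c_1,c_2))=\mathrm{Dec}_1(sk_1,c_1)$. The bridge $\mathbf{B}_{\iota,f}$ is called IND-CPA secure if $\mathscr{G}_f$ is IND-CPA secure. *)

(* Abstract model of probabilistic algorithms:
   finitely supported distributions with rational weights, and an
   abstract efficiency model (PPT / deterministic poly-time) given by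
   closure axioms. *)
From HB Require Import structures.
From Stdlib Require Import List.
From mathcomp Require Import all_boot all_order all_algebra.
Set Implicit Arguments. Unset Strict Implicit. Unset Printing Implicit Defensive.
Import Order.TTheory GRing.Theory Num.Theory.
Local Open Scope ring_scope.

Definition dist (T : Type) := seq (rat * T).
Definition dret (T : Type) (x : T) : dist T := [:: (1, x)].
Definition dbind (T U : Type) (d : dist T) (k : T -> dist U) : dist U :=
  flatten [seq [seq (p.1 * q.1, q.2) | q <- k p.2] | p <- d].
Definition Pr (T : Type) (d : dist T) (E : T -> bool) : rat :=
  \sum_(p <- d | E p.2) p.1.
Definition proper (T : Type) (d : dist T) : Prop :=
  (forall p, In p d -> 0 <= p.1) /\ \sum_(p <- d) p.1 = 1.
Definition unif (P : finType) : dist P := [seq (#|P|%:R^-1, x) | x <- enum P].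
Definition in_supp (T : Type) (x : T) (d : dist T) : Prop :=
  exists2 w, 0 < w & In (w, x) d.

Definition negligible (mu : nat -> rat) : Prop :=
  (forall n, 0 <= mu n) /\
  forall c : nat, (0 < c)%N ->
    exists Nc : nat, forall n : nat, (Nc <= n)%N -> mu n < (n%:R ^+ c)^-1.

(* ---------- efficiency model ----------
   All algorithms receive the security parameter lambda (as a nat) first.  Only closure properties satisfied by the
   standard Turing-machine notions are assumed. *)
Record eff_model := EffModel {
  PPT : forall X Y : Type, (nat -> X -> dist Y) -> Prop;
  PT : forall X Y : Type, (nat -> X -> Y) -> Prop;
  PT_fst : forall X Y : Type, PT (fun (_ : nat) (p : X * Y) => p.1);
  PT_snd : forall X Y : Type, PT (fun (_ : nat) (p : X * Y) => p.2);
  PT_pair : forall (X Y Z : Type) (f : nat -> X -> Y) (g : nat -> X -> Z),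
      PT f -> PT g -> PT (fun n x => (f n x, g n x));
  PT_comp : forall (X Y Z : Type) (f : nat -> X -> Y) (g : nat -> Y -> Z),
      PT f -> PT g -> PT (fun n x => g n (f n x));
  PPT_precomp : forall (X Y Z : Type) (h : nat -> X -> Y) (g : nat -> Y -> dist Z),
      PT h -> PPT g -> PPT (fun n x => g n (h n x))
}.

Record scheme := Scheme {
  Ptxt : finType;
  Ctxt : finType;
  SK : Type;
  PK : Type;
  keygen : nat -> unit -> dist (SK * PK);
  enc : nat -> PK * Ptxt -> dist Ctxt;
  dec : nat -> SK * Ctxt -> dist Ptxt
}.
Arguments keygen : clear implicits.
Arguments enc : clear implicits.
Arguments dec : clear implicits.

Definition correct_exp (S : scheme) (n : nat) : dist bool :=
  dbind (keygen S n tt) (fun k =>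
  dbind (unif (Ptxt S)) (fun m =>
  dbind (enc S n (k.2, m)) (fun c =>
  dbind (dec S n (k.1, c)) (fun m' => dret (m' == m))))).

Definition is_scheme (M : eff_model) (S : scheme) : Prop :=
  PPT M (keygen S) /\ PPT M (enc S) /\ PPT M (dec S) /\
  (forall n u, proper (keygen S n u)) /\
  (forall n x, proper (enc S n x)) /\
  (forall n x, proper (dec S n x)) /\
  negligible (fun n => 1 - Pr (correct_exp S n) id).

Definition ind_cpa_exp (S : scheme) (St : Type)
  (A1 : nat -> PK S -> dist (Ptxt S * Ptxt S * St))
  (A2 : nat -> St * Ctxt S -> dist bool) (b : bool) (n : nat) : dist bool :=
  dbind (keygen S n tt) (fun k =>
  dbind (A1 n k.2) (fun r =>
  dbind (enc S n (k.2, if b then r.1.2 else r.1.1)) (fun ct =>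
  A2 n (r.2, ct)))).

Definition IND_CPA (M : eff_model) (S : scheme) : Prop :=
  forall (St : Type) (A1 : nat -> PK S -> dist (Ptxt S * Ptxt S * St))
         (A2 : nat -> St * Ctxt S -> dist bool),
    PPT M A1 -> PPT M A2 ->
    (forall n x, proper (A1 n x)) -> (forall n x, proper (A2 n x)) ->
    negligible (fun n => `| Pr (ind_cpa_exp A1 A2 false n) id
                          - Pr (ind_cpa_exp A1 A2 true n) id |).

Record bridge (S1 S2 : scheme) := Bridge {
  iota : Ptxt S1 -> Ptxt S2;
  iota_inv : Ptxt S2 -> option (Ptxt S1);   (* None plays the role of bottom *)
  BK : Type;
  (* from sk1, find sk2 (of level lambda) and produce pk2 via KeyGen_2 *)
  gen2 : nat -> SK S1 -> dist (SK S2 * PK S2);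
  bkgen : nat -> SK S1 * PK S1 * SK S2 * PK S2 -> dist BK;
  fb : nat -> BK * Ctxt S1 -> dist (Ctxt S2)
}.
Arguments iota {S1 S2} _.
Arguments iota_inv {S1 S2} _.
Arguments BK {S1 S2} _.
Arguments gen2 {S1 S2} _.
Arguments bkgen {S1 S2} _.
Arguments fb {S1 S2} _.

Definition bridge_keygen (S1 S2 : scheme) (B : bridge S1 S2) (n : nat)
  : dist (SK S1 * PK S1 * SK S2 * PK S2 * BK B) :=
  dbind (keygen S1 n tt) (fun k1 =>
  dbind (gen2 B n k1.1) (fun k2 =>
  dbind (bkgen B n (k1.1, k1.2, k2.1, k2.2)) (fun bk =>
  dret (k1.1, k1.2, k2.1, k2.2, bk)))).

Definition bridge_correct_exp (S1 S2 : scheme) (B : bridge S1 S2) (n : nat)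
  : dist bool :=
  dbind (bridge_keygen B n) (fun k =>
  dbind (unif (Ptxt S1)) (fun m =>
  dbind (enc S1 n (k.1.1.1.2, m)) (fun c1 =>
  dbind (fb B n (k.2, c1)) (fun c2 =>
  dbind (dec S2 n (k.1.1.2, c2)) (fun m' => dret (m' == iota B m)))))).

Definition is_bridge (M : eff_model) (S1 S2 : scheme) (B : bridge S1 S2) : Prop :=
  injective (iota B) /\
  PT M (fun (_ : nat) => iota B) /\
  PT M (fun (_ : nat) => iota_inv B) /\
  (forall x, iota_inv B (iota B x) = Some x) /\
  (forall y, (forall x, iota B x <> y) -> iota_inv B y = None) /\
  PPT M (gen2 B) /\ PPT M (bkgen B) /\ PPT M (fb B) /\
  (forall n s, proper (gen2 B n s)) /\
  (forall n x, proper (bkgen B n x)) /\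
  (forall n x, proper (fb B n x)) /\
  (forall n s k2, in_supp k2 (gen2 B n s) -> in_supp k2 (keygen S2 n tt)) /\
  negligible (fun n => 1 - Pr (bridge_correct_exp B n) id).

Definition Gf (S1 S2 : scheme) (B : bridge S1 S2) : scheme :=
  @Scheme (Ptxt S1) (Ctxt S1 * Ctxt S2)%type
    (SK S1 * SK S2)%type (PK S1 * PK S2 * BK B)%type
    (fun n (_ : unit) => dbind (bridge_keygen B n) (fun k =>
        dret ((k.1.1.1.1, k.1.1.2), (k.1.1.1.2, k.1.2, k.2))))
    (fun n x => dbind (enc S1 n (x.1.1.1, x.2)) (fun a =>
                dbind (enc S1 n (x.1.1.1, x.2)) (fun b =>
                dbind (fb B n (x.1.2, b)) (fun c => dret (a, c)))))
    (fun n x => dec S1 n (x.1.1, x.2.1)).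

Definition bridge_IND_CPA (M : eff_model) (S1 S2 : scheme) (B : bridge S1 S2) : Prop :=
  IND_CPA M (Gf B).

(** The reduction is syntactic: an adversary against [S1] is run against
    [Gf B] by letting it look only at the [S1] public key and at the first
    component of the challenge.  Everything else the [Gf B] experiment samples
    (the [S2] keys, the bridge key, the second encryption and its image under
    [f]) is drawn from proper distributions and then discarded, so it does not
    change the probability that the adversary outputs [1].  The two
    experiments thus have the same advantage, which is negligible by the
    IND-CPA security of the bridge. *)
From Pilot Require Import Defs.
From HB Require Import structures.
From mathcomp Require Import all_boot all_order all_algebra.
Set Implicit Arguments. Unset Strict Implicit. Unset Printing Implicit Defensive.
Import Order.TTheory GRing.Theory Num.Theory.
Local Open Scope ring_scope.

Definition Ex (T : Type) (d : dist T) (F : T -> rat) : rat :=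
  \sum_(p <- d) p.1 * F p.2.

Section Expectation.

Variables T U : Type.

Lemma PrE (d : dist T) (E : T -> bool) : Pr d E = Ex d (fun x => (E x)%:R).
Proof.
rewrite /Pr /Ex big_mkcond; apply: eq_bigr => p _.
by case: (E p.2); rewrite ?mulr1 ?mulr0.
Qed.

Lemma eq_Ex (d : dist T) (F G : T -> rat) : F =1 G -> Ex d F = Ex d G.
Proof. by move=> FG; apply: eq_bigr => p _; rewrite FG. Qed.

Lemma Ex_dret (x : T) (F : T -> rat) : Ex (dret x) F = F x.
Proof. by rewrite /Ex big_seq1 mul1r. Qed.

Lemma Ex_dbind (d : dist T) (k : T -> dist U) (F : U -> rat) :
  Ex (dbind d k) F = Ex d (fun x => Ex (k x) F).
Proof.
elim: d => [|p d IHd]; first by rewrite /Ex !big_nil.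
rewrite /Ex /dbind /= big_cat big_cons big_map; congr (_ + _); last exact: IHd.
by rewrite mulr_sumr; apply: eq_bigr => q _; rewrite mulrA.
Qed.

Lemma Ex_cst (d : dist T) (c : rat) : Defs.proper d -> Ex d (fun _ => c) = c.
Proof. by case=> _ d1; rewrite /Ex -mulr_suml d1 mul1r. Qed.

End Expectation.

Lemma eq_negligible (mu nu : nat -> rat) :
  mu =1 nu -> negligible mu -> negligible nu.
Proof.
move=> eq_mu [mu_ge0 mu_small]; split=> [n | c c_gt0]; first by rewrite -eq_mu.
have [N HN] := mu_small c c_gt0.
by exists N => n le_Nn; rewrite -eq_mu; apply: HN.
Qed.

Section Reduction.

Variables (M : eff_model) (S1 S2 : scheme) (B : bridge S1 S2).

Hypothesis gen2_proper : forall n s, Defs.proper (gen2 B n s).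
Hypothesis bkgen_proper : forall n x, Defs.proper (bkgen B n x).
Hypothesis enc1_proper : forall n x, Defs.proper (enc S1 n x).
Hypothesis fb_proper : forall n x, Defs.proper (fb B n x).

Lemma Ex_Gf_keygen_pk1 n (F : PK S1 -> rat) :
  Ex (keygen (Gf B) n tt) (fun k => F k.2.1.1) = Ex (keygen S1 n tt) (fun k => F k.2).
Proof.
rewrite /= Ex_dbind /bridge_keygen Ex_dbind; apply: eq_Ex => k1.
rewrite Ex_dbind -[RHS](Ex_cst _ (gen2_proper n k1.1)); apply: eq_Ex => k2.
rewrite Ex_dbind -[RHS](Ex_cst _ (bkgen_proper n (k1.1, k1.2, k2.1, k2.2))).
by apply: eq_Ex => bk; rewrite !Ex_dret.
Qed.

Lemma Ex_Gf_enc_fst n pk m (F : Ctxt S1 -> rat) :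
  Ex (enc (Gf B) n (pk, m)) (fun c => F c.1) = Ex (enc S1 n (pk.1.1, m)) F.
Proof.
rewrite /= Ex_dbind; apply: eq_Ex => a.
rewrite Ex_dbind -[RHS](Ex_cst _ (enc1_proper n (pk.1.1, m))); apply: eq_Ex => b.
rewrite Ex_dbind -[RHS](Ex_cst _ (fb_proper n (pk.2, b))).
by apply: eq_Ex => c; rewrite Ex_dret.
Qed.

Variables (St : Type) (A1 : nat -> PK S1 -> dist (Ptxt S1 * Ptxt S1 * St))
  (A2 : nat -> St * Ctxt S1 -> dist bool).

Definition Gf_adv1 n (pk : PK (Gf B)) := A1 n pk.1.1.
Definition Gf_adv2 n (x : St * Ctxt (Gf B)) := A2 n (x.1, x.2.1).

Lemma PPT_Gf_adv1 : PPT M A1 -> PPT M Gf_adv1.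
Proof. exact: PPT_precomp (PT_comp (PT_fst _ _ _) (PT_fst _ _ _)). Qed.

Lemma PPT_Gf_adv2 : PPT M A2 -> PPT M Gf_adv2.
Proof.
exact: PPT_precomp (PT_pair (PT_fst _ _ _) (PT_comp (PT_snd _ _ _) (PT_fst _ _ _))).
Qed.

Lemma Pr_ind_cpa_exp_Gf b n :
  Pr (ind_cpa_exp Gf_adv1 Gf_adv2 b n) id = Pr (ind_cpa_exp A1 A2 b n) id.
Proof.
pose G pk := Ex (dbind (A1 n pk) (fun r =>
  dbind (enc S1 n (pk, if b then r.1.2 else r.1.1)) (fun c => A2 n (r.2, c))))
  (fun x : bool => x%:R).
rewrite !PrE; transitivity (Ex (keygen (Gf B) n tt) (fun k => G k.2.1.1)).
  rewrite (Ex_dbind (keygen (Gf B) n tt)); apply: eq_Ex => k.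
  rewrite /G !Ex_dbind; apply: eq_Ex => r.
  rewrite (Ex_dbind (enc (Gf B) _ _)) (Ex_dbind (enc S1 _ _)).
  exact: Ex_Gf_enc_fst n k.2 _ (fun c => Ex (A2 n (r.2, c)) (fun x : bool => x%:R)).
by rewrite Ex_Gf_keygen_pk1 (Ex_dbind (keygen S1 n tt)).
Qed.

End Reduction.

Theorem proposition1 (M : eff_model) (S1 S2 : scheme) (B : bridge S1 S2) :
  is_scheme M S1 -> is_scheme M S2 -> is_bridge M B ->
  bridge_IND_CPA M B -> IND_CPA M S1.
Proof.
move=> [_ [_ [_ [_ [enc1_proper _]]]]] _.
move=> [_ [_ [_ [_ [_ [_ [_ [_ [gen2_proper [bkgen_proper [fb_proper _]]]]]]]]]]].
move=> Gf_secure St A1 A2 PPT_A1 PPT_A2 A1_proper A2_proper.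
apply: eq_negligible _ (Gf_secure St _ _
  (PPT_Gf_adv1 B PPT_A1) (PPT_Gf_adv2 B PPT_A2)
  (fun n _ => A1_proper n _) (fun n _ => A2_proper n _)) => n.
by rewrite !(Pr_ind_cpa_exp_Gf gen2_proper bkgen_proper enc1_proper fb_proper A1 A2 _ n).
Qed.
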